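(* Let $k$ be a field of characteristic zero, $A_1=k[t,\partial]$ the first Weyl algebra, $R=k[t]$, let $V$ be a primary decomposable subspace of $R$, let $p\in k[t]$ and $\sigma:=\exp(\mathrm{ad}(p))$. Then $\sigma(\mathcal{D}(R,V))=\mathcal{D}(R,V)$ if and only if $p\in S(V)$.
   Context: $A_1$ is the $k$-algebra generated by $t,\partial$ with $\partial t-t\partial=1$. Elements of $k(t)[\partial]$ act as $k$-linear endomorphisms of $k(t)$ (with $\partial$ acting as the derivative). For $k$-subspaces $V,W\subseteq k(t)$, $\mathcal{D}(V,W):=\{d\in k(t)[\partial]: d(V)\subseteq W\}$. For $b\in R$, $\mathcal{O}(b):=\{a\in R: a'\in bR\}$ ($a'$ the formal derivative), and for a subspace $V\subseteq R$, $S(V):=\{a\in R: aV\subseteq V\}$. A non-zero $k$-subspace $V$ of $R$ is primary decomposable if $S(V)$ contains $\mathcal{O}(b)$ for some $b\neq 0$. For $p\in R$, $\exp(\mathrm{ad}(p))$ is the automorphism of $A_1$ given by $d\mapsto d+[d,p]+\frac{1}{2!}[[d,p],p]+\frac{1}{3!}[[[d,p],p],p]+\cdots$, where $[d,p]=dp-pd$ (a finite sum since $d\mapsto[d,p]$ is locally nilpotent). *)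

From HB Require Import structures.
From mathcomp Require Import all_boot all_order all_algebra.
Set Implicit Arguments. Unset Strict Implicit. Unset Printing Implicit Defensive.
Import GRing.Theory.
Local Open Scope ring_scope.

Section WeylDefs.
Variable k : fieldType.

Definition Kt := {fraction {poly k}}.

Definition derF (x : Kt) : Kt :=
  let r := repr x in
  (tofrac (\n_r)^`()) / tofrac \d_r
  - tofrac \n_r * tofrac (\d_r)^`() / (tofrac \d_r) ^+ 2.

(* Elements of k(t)[\partial] are represented by their coefficient list:
   d = \sum_i d`_i \partial^i, stored as a polynomial in 'X = \partial over k(t). *)
Definition diffop := {poly Kt}.

Definition act (d : diffop) (f : Kt) : Kt :=
  \sum_(i < size d) d`_i * iter i derF f.

(* product in k(t)[\partial]:  (a \partial^i)(b \partial^j)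
   = \sum_l C(i,l) a b^(l) \partial^(i+j-l) *)
Definition mulD (d e : diffop) : diffop :=
  \sum_(i < size d) \sum_(j < size e) \sum_(l < i.+1)
     ('C(i, l)%:R * d`_i * iter l derF e`_j) *: 'X^(i + j - l).

Definition commD (d e : diffop) : diffop := mulD d e - mulD e d.

Definition adp (p : {poly k}) (d : diffop) : diffop := commD d (tofrac p)%:P.

(* sigma = exp(ad p): d |-> \sum_n (1/n!) [..[d,p],..,p]; the terms with n >= size d
   vanish (ad p lowers the order by one), so the sum is truncated there. *)
Definition sigma (p : {poly k}) (d : diffop) : diffop :=
  \sum_(n < size d) (n`!%:R)^-1 *: iter n (adp p) d.

Definition Dop (V W : Kt -> Prop) : diffop -> Prop :=
  fun d => forall f, V f -> W (act d f).

Definition RinKt : Kt -> Prop := fun f => exists r : {poly k}, f = tofrac r.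
Definition inKt (V : {poly k} -> Prop) : Kt -> Prop :=
  fun f => exists v, V v /\ f = tofrac v.

Definition Ob (b : {poly k}) : {poly k} -> Prop :=
  fun a => exists q, a^`() = b * q.

Definition SV (V : {poly k} -> Prop) : {poly k} -> Prop :=
  fun a => forall v, V v -> V (a * v).

Definition is_subspace (V : {poly k} -> Prop) : Prop :=
  V 0 /\ (forall (c : k) u v, V u -> V v -> V (c *: u + v)).

Definition primary_decomposable (V : {poly k} -> Prop) : Prop :=
  is_subspace V /\ (exists v, V v /\ v <> 0) /\
  exists b : {poly k}, b <> 0 /\ (forall a, Ob b a -> SV V a).

End WeylDefs.

From HB Require Import structures.
From mathcomp Require Import all_boot all_order all_algebra.
From mathcomp Require Import ring.
Set Implicit Arguments. Unset Strict Implicit. Unset Printing Implicit Defensive.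
Import GRing.Theory.
Local Open Scope ring_scope.

(* If p lies in S(V), then [d, p](r) = d(p r) - p d(r) shows that ad p maps D(R, V) into
   itself; as ad p lowers the order, sigma = exp(ad p) and its inverse exp(-ad p) are finite
   sums of powers of ad p, so both preserve D(R, V).
   Conversely, if sigma preserves D(R, V) then so does every sigma^j = exp(j ad p); since
   D(R, V) is a k-subspace and j |-> sigma^j(d) is polynomial in j, a Vandermonde argument
   puts each (ad p)^n(d) / n! in D(R, V), in particular [d, p]. Take for d the operator v u,
   where v is in V, m = deg b and u = \sum_j (-1)^j b^(m-j) \partial^j: u(r)' = (-1)^m b r^(m+1)
   puts u(R) inside O(b), hence inside S(V), and u(1) = b^(m) is a non-zero constant g.
   Then [d, p](1) = v u(p) - g p v lies in V, and so does v u(p), hence p v is in V. *)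

Lemma sum_ord_widen (V : nmodType) (n1 n2 : nat) (F : nat -> V) : (n1 <= n2)%N ->
  (forall i : nat, (n1 <= i)%N -> F i = 0) -> \sum_(i < n1) F i = \sum_(i < n2) F i.
Proof.
move=> le F0; rewrite (big_ord_widen n2 F le) big_mkcond; apply: eq_bigr => i _.
by case: ifP => // /negbT; rewrite -leqNgt => /F0 ->.
Qed.

Lemma sum_delta_addn (R : nzRingType) (g : nat -> R) (B N M : nat) : (M < B)%N ->
  \sum_(n < B) g n * ((n + N)%N == M)%:R = (N <= M)%N%:R * g (M - N)%N.
Proof.
move=> ltMB; case: (leqP N M) => [leNM | ltMN].
  have ltMN_B : (M - N < B)%N by apply: leq_ltn_trans (leq_subr _ _) ltMB.
  rewrite (bigD1 (Ordinal ltMN_B)) //= subnK // eqxx mulr1 mul1r big1 ?addr0 //.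
  move=> n ne_n; rewrite (_ : (n + N == M)%N = false) ?mulr0 //.
  by apply: contraNF ne_n => /eqP E; apply/eqP/val_inj; rewrite /= -E addnK.
rewrite mul0r big1 // => n _; rewrite (_ : (n + N == M)%N = false) ?mulr0 //.
by apply/eqP => E; move: ltMN; rewrite -E ltnNge leq_addl.
Qed.

Section TruncatedExponential.
Variables (F : fieldType) (M : lmodType F) (f : M -> M).
Hypothesis fact_neq0 : forall n, (n`!%:R : F) != 0.
Hypothesis fD : {morph f : x y / x + y}.
Hypothesis fZ : forall (c : F) x, f (c *: x) = c *: f x.

Lemma invfact_binomial (n i : nat) : (i <= n)%N ->
  (n`!%:R : F)^-1 * 'C(n, i)%:R = ((n - i)`!%:R)^-1 * (i`!%:R)^-1.
Proof.
move=> le_in.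
have fact_n : (n`!%:R : F) = 'C(n, i)%:R * (i`!%:R * (n - i)`!%:R).
  by rewrite -!natrM bin_fact.
have bin_neq0 : ('C(n, i)%:R : F) != 0.
  by apply: contraNneq (fact_neq0 n) => C0; rewrite fact_n C0 mul0r.
by rewrite fact_n; field; rewrite bin_neq0 !fact_neq0.
Qed.

Lemma exp_cauchy_coef (a : F) (B n : nat) : (n < B)%N ->
  \sum_(i < B) \sum_(j < B) ((i`!%:R)^-1 * (a ^+ j / j`!%:R)) * ((i + j)%N == n)%:R
  = (a + 1) ^+ n / n`!%:R.
Proof.
move=> ltnB; rewrite exchange_big /=.
under eq_bigr => j _.
  under eq_bigr => i _ do rewrite mulrAC.
  rewrite -big_distrl /= (sum_delta_addn (fun i => (i`!%:R)^-1) j ltnB).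
  over.
rewrite /= -(@sum_ord_widen _ n.+1 _
  (fun j => (j <= n)%N%:R / (n - j)`!%:R * (a ^+ j / j`!%:R))) //; last first.
  by move=> j; rewrite ltnNge => /negbTE ->; rewrite !mul0r.
rewrite addrC exprDn mulr_suml; apply: eq_bigr => i _.
have le_in : (i <= n)%N by rewrite -ltnS.
rewrite le_in expr1n mul1r -(mulr_natr (a ^+ i)).
rewrite [RHS](_ : _ = a ^+ i * ((n`!%:R)^-1 * 'C(n, i)%:R)); last by ring.
by rewrite invfact_binomial //= mul1r; ring.
Qed.

Lemma iter_f0 n : iter n f 0 = 0.
Proof. by elim: n => //= n ->; rewrite -[X in f X](scale0r 0) fZ scale0r. Qed.

Lemma iter_fD n : {morph iter n f : x y / x + y}.
Proof. by move=> x y; elim: n => //= n ->; rewrite fD. Qed.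

Lemma iter_fZ n (c : F) x : iter n f (c *: x) = c *: iter n f x.
Proof. by elim: n => //= n ->; rewrite fZ. Qed.

Lemma iter_f_sum n I (r : seq I) (P : pred I) (G : I -> M) :
  iter n f (\sum_(i <- r | P i) G i) = \sum_(i <- r | P i) iter n f (G i).
Proof. exact: (big_morph _ (iter_fD n) (iter_f0 n)). Qed.

Lemma iter_f_eq0 B n x : iter B f x = 0 -> (B <= n)%N -> iter n f x = 0.
Proof. by move=> fBx0 leBn; rewrite -(subnK leBn) iterD fBx0 iter_f0. Qed.

Lemma sum_delta_scale (B m : nat) (g : nat -> M) : (forall n, (B <= n)%N -> g n = 0) ->
  g m = \sum_(n < B) (m == n)%:R *: g n.
Proof.
move=> g0; case: (ltnP m B) => [ltmB | leBm].
  rewrite (bigD1 (Ordinal ltmB)) //= eqxx scale1r big1 ?addr0 // => n ne_n.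
  rewrite (_ : (m == n) = false) ?scale0r //.
  by apply: contraNF ne_n => /eqP E; apply/eqP/val_inj.
rewrite g0 // big1 // => n _; rewrite (_ : (m == n) = false) ?scale0r //.
by apply/eqP => E; move: leBm; rewrite E leqNgt ltn_ord.
Qed.

Definition exp_trunc (B : nat) (a : F) (x : M) : M :=
  \sum_(n < B) (a ^+ n / n`!%:R) *: iter n f x.

Lemma exp_trunc_widen B B' a x : iter B f x = 0 -> (B <= B')%N ->
  exp_trunc B' a x = exp_trunc B a x.
Proof.
move=> fBx0 leBB'; rewrite /exp_trunc.
rewrite -(@sum_ord_widen _ B B' (fun n => (a ^+ n / n`!%:R) *: iter n f x)) // => n leBn.
by rewrite (iter_f_eq0 fBx0 leBn) scaler0.
Qed.

Lemma exp_trunc0 B x : iter B f x = 0 -> exp_trunc B 0 x = x.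
Proof.
case: B => [/= ->|B _]; first by rewrite /exp_trunc big_ord0.
rewrite /exp_trunc big_ord_recl /= expr0 mul1r invr1 scale1r big1 ?addr0 // => n _.
by rewrite expr0n mul0r scale0r.
Qed.

Lemma exp_trunc_add1 B a x : iter B f x = 0 ->
  exp_trunc B 1 (exp_trunc B a x) = exp_trunc B (a + 1) x.
Proof.
move=> fBx0; rewrite /exp_trunc.
transitivity (\sum_(i < B) \sum_(j < B) \sum_(n < B)
   (((i`!%:R)^-1 * (a ^+ j / j`!%:R)) * ((i + j)%N == n)%:R) *: iter n f x).
  apply: eq_bigr => i _; rewrite iter_f_sum scaler_sumr; apply: eq_bigr => j _.
  rewrite iter_fZ scalerA -iterD (@sum_delta_scale B (i + j) (fun n => iter n f x)).
    by rewrite scaler_sumr; apply: eq_bigr => n _; rewrite expr1n mul1r scalerA.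
  by move=> n; apply: iter_f_eq0.
under eq_bigr => i _ do rewrite exchange_big /=.
rewrite exchange_big /=; apply: eq_bigr => n _.
under eq_bigr => i _ do rewrite -scaler_suml.
by rewrite -scaler_suml exp_cauchy_coef.
Qed.

End TruncatedExponential.

Section VandermondeExtraction.
Variables (K F : fieldType) (phi : {rmorphism K -> F}) (M : lmodType F).
Hypothesis natr_neq0 : forall n, (0 < n)%N -> (n%:R : K) != 0.
Variable W : M -> Prop.
Hypothesis W0 : W 0.
Hypothesis W_comb : forall c x z, W x -> W z -> W (phi c *: x + z).

Lemma W_sum B (c : 'I_B -> K) (x : 'I_B -> M) :
  (forall j, W (x j)) -> W (\sum_(j < B) phi (c j) *: x j).
Proof. by move=> Wx; elim/big_rec: _ => // j z _ Wz; apply: W_comb. Qed.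

Lemma vandermonde_extract B (y : nat -> M) :
  (forall j, (j < B)%N -> W (\sum_(n < B) (j%:R ^+ n) *: y n)) ->
  forall n, (n < B)%N -> W (y n).
Proof.
move=> Wj n0 ltn0B; set i0 := Ordinal ltn0B.
pose A : 'M[K]_B := \matrix_(n < B, j < B) (j%:R : K) ^+ n.
have A_unit : A \in unitmx.
  have -> : A = Vandermonde B (\row_(j < B) (j%:R : K)) by apply/matrixP => i j; rewrite !mxE.
  rewrite unitmxE unitfE det_Vandermonde.
  apply/prodf_neq0 => i _; apply/prodf_neq0 => j lt_ij.
  by rewrite !mxE -natrB ?natr_neq0 ?subn_gt0 // ltnW.
have -> : y n0 = \sum_(j < B) phi (invmx A j i0) *: \sum_(n < B) (j%:R ^+ n) *: y n.
  under eq_bigr => j _ do rewrite scaler_sumr.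
  rewrite exchange_big /= -[y n0]/(y i0).
  have -> : y i0 = \sum_(n < B) phi ((A *m invmx A) n i0) *: y n.
    rewrite mulmxV // (bigD1 i0) //= !mxE eqxx rmorph1 scale1r big1 ?addr0 //.
    by move=> n ne_n; rewrite !mxE (negbTE ne_n) rmorph0 scale0r.
  apply: eq_bigr => n _; rewrite !mxE rmorph_sum scaler_suml; apply: eq_bigr => j _.
  by rewrite rmorphM !mxE rmorphXn rmorph_nat scalerA mulrC.
by apply: W_sum => j; apply: Wj.
Qed.

End VandermondeExtraction.

(* Identities for the quotient rule, proved over an abstract field: [field] does not finish
   in reasonable time on the concrete field k(t). *)
Section QuotientRule.
Variable F : fieldType.

Lemma quotient_rule_eq (n d n0 d0 n' d' n0' d0' : F) : d != 0 -> d0 != 0 ->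
  (n0' * d0 - n0 * d0') * d ^+ 2 = (n' * d - n * d') * d0 ^+ 2 ->
  n0' / d0 - n0 * d0' / d0 ^+ 2 = (n' * d - n * d') / d ^+ 2.
Proof.
move=> d_neq0 d0_neq0 E.
have -> : n0' / d0 - n0 * d0' / d0 ^+ 2 =
    (n0' * d0 - n0 * d0') * d ^+ 2 / (d0 ^+ 2 * d ^+ 2) by field; rewrite d_neq0 d0_neq0.
by rewrite E; field; rewrite d_neq0 d0_neq0.
Qed.

Lemma quotient_rule_add (a b c e a' b' c' e' : F) : b != 0 -> e != 0 ->
  (a' * b - a * b') / b ^+ 2 + (c' * e - c * e') / e ^+ 2 =
  ((a' * e + a * e' + (c' * b + c * b')) * (b * e)
     - (a * e + c * b) * (b' * e + b * e')) / (b * e) ^+ 2.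
Proof. by move=> b_neq0 e_neq0; field; rewrite b_neq0 e_neq0. Qed.

Lemma quotient_rule_mul (a b c e a' b' c' e' : F) : b != 0 -> e != 0 ->
  ((a' * c + a * c') * (b * e) - (a * c) * (b' * e + b * e')) / (b * e) ^+ 2 =
  (a' * b - a * b') / b ^+ 2 * (c / e) + a / b * ((c' * e - c * e') / e ^+ 2).
Proof. by move=> b_neq0 e_neq0; field; rewrite b_neq0 e_neq0. Qed.

End QuotientRule.

Section FractionDerivation.
Variable k : fieldType.
Local Notation tf := (@tofrac {poly k}).
Local Notation D := (@derF k).

Lemma tofrac_inj : injective tf.
Proof. by move=> a b /eqP; rewrite tofrac_eq => /eqP. Qed.

Lemma repr_frac (x : Kt k) : x * tf \d_(repr x) = tf \n_(repr x).
Proof.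
rewrite -{1}[x]reprK; case: (repr x) => [[n d] /= d_neq0].
unlock tofrac; rewrite /=.
transitivity (\pi_({fraction {poly k}})%qT
  (FracField.mulf (@mkRatio _ (n, d) d_neq0) (Ratio d 1))).
  exact: esym (FracField.pi_mul _ _).
apply/eqmodP; rewrite /= FracField.equivfE /= /FracField.mulf /=.
by rewrite !numden_Ratio ?mulr1 ?mul1r ?oner_neq0 ?mulf_neq0 ?oner_neq0 // mulrC.
Qed.

Lemma frac_exists (x : Kt k) : exists n d, d != 0 /\ x * tf d = tf n.
Proof. by exists \n_(repr x), \d_(repr x); split; [apply: denom_ratioP | apply: repr_frac]. Qed.

Lemma derF_frac (x : Kt k) (n d : {poly k}) : d != 0 -> x * tf d = tf n ->
  D x = (tf n^`() * tf d - tf n * tf d^`()) / (tf d) ^+ 2.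
Proof.
move=> d_neq0 xdE; rewrite /derF.
set n0 := \n_(repr x); set d0 := \d_(repr x).
have d0_neq0 : d0 != 0 := denom_ratioP (repr x).
have nd0 : n0 * d = n * d0.
  apply: tofrac_inj; rewrite !tofracM -xdE -repr_frac -!mulrA; congr (x * _).
  exact: mulrC.
have nd0' : n0^`() * d + n0 * d^`() = n^`() * d0 + n * d0^`() by rewrite -!derivM nd0.
have quot : (n0^`() * d0 - n0 * d0^`()) * d ^+ 2 = (n^`() * d - n * d^`()) * d0 ^+ 2.
  apply/eqP; rewrite -subr_eq0; apply/eqP.
  transitivity (d0 * d * ((n0^`() * d + n0 * d^`()) - (n^`() * d0 + n * d0^`()))
     - (d^`() * d0 + d * d0^`()) * (n0 * d - n * d0)); first by ring.
  by rewrite nd0 nd0' !subrr !mulr0 subr0.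
apply: quotient_rule_eq; rewrite ?tofrac_eq0 //.
by rewrite -!(tofracM, tofracB, tofracXn) quot.
Qed.

Lemma derF_tofrac (r : {poly k}) : D (tf r) = tf r^`().
Proof.
rewrite (@derF_frac (tf r) r 1) ?oner_neq0 ?tofrac1 ?mulr1 //.
by rewrite derivC tofrac0 mulr0 subr0 expr1n divr1.
Qed.

Lemma derF_add : {morph D : x y / x + y}.
Proof.
move=> x y; have [a [b [b_neq0 xE]]] := frac_exists x.
have [c [e [e_neq0 yE]]] := frac_exists y.
rewrite (derF_frac b_neq0 xE) (derF_frac e_neq0 yE).
rewrite (@derF_frac _ (a * e + c * b) (b * e)) ?mulf_neq0 //; last first.
  rewrite !(tofracM, tofracD) -xE -yE.
  by rewrite mulrDl !mulrA [y * _ * _]mulrAC.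
rewrite !(derivM, derivD, tofracM, tofracD).
by symmetry; apply: quotient_rule_add; rewrite tofrac_eq0.
Qed.

Lemma derF_mul x y : D (x * y) = D x * y + x * D y.
Proof.
have [a [b [b_neq0 xE]]] := frac_exists x.
have [c [e [e_neq0 yE]]] := frac_exists y.
have tfb : tf b != 0 by rewrite tofrac_eq0.
have tfe : tf e != 0 by rewrite tofrac_eq0.
have xE' : x = tf a / tf b by rewrite -xE (mulfK tfb).
have yE' : y = tf c / tf e by rewrite -yE (mulfK tfe).
rewrite (derF_frac b_neq0 xE) (derF_frac e_neq0 yE).
rewrite (@derF_frac _ (a * c) (b * e)) ?mulf_neq0 //; last first.
  rewrite !tofracM -xE -yE.
  by rewrite mulrACA.
rewrite xE' yE' !(derivM, derivD, tofracM, tofracD).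
by apply: quotient_rule_mul; [exact: tfb | exact: tfe].
Qed.

Lemma derF0 : D 0 = 0.
Proof. by rewrite -tofrac0 derF_tofrac deriv0 tofrac0. Qed.

Lemma derF_sum I (r : seq I) (P : pred I) (G : I -> Kt k) :
  D (\sum_(i <- r | P i) G i) = \sum_(i <- r | P i) D (G i).
Proof. exact: (big_morph _ derF_add derF0). Qed.

Lemma derFMn x n : D (x *+ n) = D x *+ n.
Proof. by elim: n => [|n IH]; rewrite ?mulr0n ?derF0 // !mulrS derF_add IH. Qed.

Lemma iter_derF0 n : iter n D 0 = 0.
Proof. by elim: n => //= n ->; rewrite derF0. Qed.

Lemma iter_derF_tofrac n r : iter n D (tf r) = tf r^`(n).
Proof. by elim: n => //= n ->; rewrite derF_tofrac. Qed.

Lemma leibniz_derF i (c g : Kt k) : iter i D (c * g) =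
  \sum_(0 <= l < i.+1) (iter l D c * iter (i - l) D g) *+ 'C(i, l).
Proof.
elim: i => [|i IH]; first by rewrite big_nat1 /= mulr1n.
rewrite [LHS]/= IH derF_sum.
under eq_bigr => l _ do rewrite derFMn derF_mul mulrnDl.
rewrite big_split /= [RHS]big_nat_recl // bin0 mulr1n subn0.
under [in RHS]eq_bigr => l _ do rewrite binS mulrnDr subSS.
rewrite big_split /= addrC addrA; congr (_ + _).
rewrite [LHS]big_nat_recl // bin0 mulr1n subn0 [in RHS]big_nat_recr //=.
rewrite bin_small // mulr0n addr0; congr (_ + _).
rewrite !big_nat; apply: eq_bigr => l /andP [_ lt_li].
by rewrite [in RHS]/= -(subnSK lt_li).
Qed.

End FractionDerivation.

Section Operators.
Variable k : fieldType.
Local Notation tf := (@tofrac {poly k}).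
Local Notation D := (@derF k).

Lemma act_widen (d : diffop k) f (N : nat) : (size d <= N)%N ->
  act d f = \sum_(i < N) d`_i * iter i D f.
Proof.
move=> le_dN; rewrite /act (@sum_ord_widen _ _ N (fun i => d`_i * iter i D f)) //.
by move=> i le_di; rewrite nth_default ?mul0r.
Qed.

Lemma actD (a b : diffop k) f : act (a + b) f = act a f + act b f.
Proof.
set N := maxn (size a) (size b).
rewrite !(@act_widen _ _ N) ?leq_maxl ?leq_maxr ?(leq_trans (size_add _ _)) //.
by rewrite -big_split; apply: eq_bigr => i _; rewrite coefD mulrDl.
Qed.

Lemma actZ (c : Kt k) (a : diffop k) f : act (c *: a) f = c * act a f.
Proof.
rewrite !(@act_widen _ _ (size a)) ?size_scale_leq // mulr_sumr.
by apply: eq_bigr => i _; rewrite coefZ mulrA.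
Qed.

Lemma act0 f : act (0 : diffop k) f = 0.
Proof. by rewrite /act size_poly0 big_ord0. Qed.

Lemma actB (a b : diffop k) f : act (a - b) f = act a f - act b f.
Proof. by rewrite actD -scaleN1r actZ mulN1r. Qed.

Lemma act_sum I (r : seq I) (P : pred I) (G : I -> diffop k) f :
  act (\sum_(i <- r | P i) G i) f = \sum_(i <- r | P i) act (G i) f.
Proof.
elim: r => [|x r IH]; first by rewrite !big_nil act0.
by rewrite !big_cons; case: (P x); rewrite ?actD IH.
Qed.

Lemma act_monomial (c : Kt k) n f : act (c *: 'X^n) f = c * iter n D f.
Proof.
rewrite actZ (@act_widen _ _ n.+1) ?size_polyXn // big_ord_recr /=.
rewrite big1 ?add0r ?coefXn ?eqxx ?mul1r // => i _.
by rewrite coefXn (ltn_eqF (ltn_ord i)) mul0r.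
Qed.

Lemma mulD_widen (d e : diffop k) (N M : nat) : (size d <= N)%N -> (size e <= M)%N ->
  mulD d e = \sum_(i < N) \sum_(j < M) \sum_(l < i.+1)
     ('C(i, l)%:R * d`_i * iter l D e`_j) *: 'X^(i + j - l).
Proof.
move=> le_dN le_eM; rewrite /mulD.
transitivity (\sum_(i < size d) \sum_(j < M) \sum_(l < i.+1)
     ('C(i, l)%:R * d`_i * iter l D e`_j) *: 'X^(i + j - l)).
  apply: eq_bigr => i _; apply: (@sum_ord_widen _ _ _ (fun j => \sum_(l < i.+1)
    ('C(i, l)%:R * d`_i * iter l D e`_j) *: 'X^(i + j - l))) => // j le_ej.
  by apply: big1 => l _; rewrite (nth_default _ le_ej) iter_derF0 mulr0 scale0r.
apply: (@sum_ord_widen _ _ _ (fun i => \sum_(j < M) \sum_(l < i.+1)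
  ('C(i, l)%:R * d`_i * iter l D e`_j) *: 'X^(i + j - l))) => // i le_di.
by apply: big1 => j _; apply: big1 => l _; rewrite (nth_default _ le_di) mulr0 mul0r scale0r.
Qed.

(* The commutator [\partial^i, p], expanded by the Leibniz rule. *)
Definition comm_dpow (p : {poly k}) (i : nat) : diffop k :=
  \sum_(l < i.+1) ('C(i, l)%:R * iter l D (tf p)) *: 'X^(i - l) - tf p *: 'X^i.

Lemma adp_expand p (x : diffop k) (N : nat) : (size x <= N)%N ->
  adp p x = \sum_(i < N) x`_i *: comm_dpow p i.
Proof.
move=> le_xN; rewrite /adp /commD.
rewrite (@mulD_widen x _ N 1) ?size_polyC_leq1 // (@mulD_widen _ x 1 N) ?size_polyC_leq1 //.
rewrite [X in _ - X]big_ord1 /=; under eq_bigr => i _ do rewrite big_ord1.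
rewrite -sumrB; apply: eq_bigr => i _; rewrite /comm_dpow scalerBr scaler_sumr.
congr (_ - _).
  apply: eq_bigr => l _; rewrite coefC eqxx addn0 scalerA; congr (_ *: _).
  by rewrite mulrCA mulrA.
by rewrite big_ord1 coefC eqxx /= bin0 mul1r subn0 add0n scalerA mulrC.
Qed.

Lemma act_comm_dpow p i g :
  act (comm_dpow p i) g = iter i D (tf p * g) - tf p * iter i D g.
Proof.
rewrite /comm_dpow actB act_monomial act_sum leibniz_derF big_mkord; congr (_ - _).
by apply: eq_bigr => l _; rewrite act_monomial -mulrA mulr_natl.
Qed.

Lemma act_adp p (x : diffop k) g :
  act (adp p x) g = act x (tf p * g) - tf p * act x g.
Proof.
rewrite (@adp_expand _ _ (size x)) // act_sum !(@act_widen x _ (size x)) //.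
rewrite mulr_sumr -sumrB; apply: eq_bigr => i _.
by rewrite actZ act_comm_dpow mulrBr mulrCA.
Qed.

Lemma size_sum_leq I (r : seq I) (P : pred I) (G : I -> diffop k) (n : nat) :
  (forall i, P i -> (size (G i) <= n)%N) -> (size (\sum_(i <- r | P i) G i)%R <= n)%N.
Proof.
move=> le_Gn; elim/big_ind: _ => //; first by rewrite size_poly0.
by move=> a b ha hb; apply: leq_trans (size_add _ _) _; rewrite geq_max ha hb.
Qed.

Lemma size_comm_dpow p i : (size (comm_dpow p i) <= i)%N.
Proof.
rewrite /comm_dpow big_ord_recl /= bin0 mul1r subn0 addrAC subrr add0r.
apply: size_sum_leq => l _; apply: leq_trans (size_scale_leq _ _) _.
by rewrite size_polyXn; case: i l => [|i] l; [case: l | rewrite subSS ltnS leq_subr].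
Qed.

Lemma size_adp p (x : diffop k) : (size (adp p x) <= (size x).-1)%N.
Proof.
rewrite (@adp_expand _ _ (size x)) //; apply: size_sum_leq => i _.
apply: leq_trans (size_scale_leq _ _) _; apply: leq_trans (size_comm_dpow _ _) _.
by case: (size x) i => [[]|n] i //=; rewrite -ltnS.
Qed.

Lemma iter_adp_eq0 p n (x : diffop k) : (size x <= n)%N -> iter n (adp p) x = 0.
Proof.
elim: n x => [|n IH] x le_xn; first by apply/eqP; rewrite -size_poly_eq0 -leqn0.
rewrite iterSr IH // (leq_trans (size_adp p x)) //.
by case: (size x) le_xn.
Qed.

Lemma size_iter_adp p n (x : diffop k) : (size (iter n (adp p) x) <= size x)%N.
Proof.
elim: n => //= n IH; apply: leq_trans (size_adp _ _) _.
by apply: leq_trans IH; rewrite leq_pred.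
Qed.

Lemma adpD p : {morph @adp k p : x y / x + y}.
Proof.
move=> x y; set N := maxn (size x) (size y).
rewrite !(@adp_expand _ _ N) ?leq_maxl ?leq_maxr ?(leq_trans (size_add _ _)) //.
by rewrite -big_split; apply: eq_bigr => i _; rewrite coefD scalerDl.
Qed.

Lemma adpZ p (c : Kt k) (x : diffop k) : adp p (c *: x) = c *: adp p x.
Proof.
rewrite !(@adp_expand _ _ (size x)) ?size_scale_leq // scaler_sumr.
by apply: eq_bigr => i _; rewrite coefZ scalerA.
Qed.

End Operators.

Section ExponentialOfAd.
Variable k : fieldType.
Hypothesis chark0 : [pchar k] =i pred0.
Variable p : {poly k}.
Local Notation ad := (@adp k p).

Lemma natr_neq0 n : (0 < n)%N -> (n%:R : k) != 0.
Proof. by move=> n_gt0; rewrite (GRing.pcharf0P _).1 // -lt0n. Qed.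

Lemma fact_neq0 n : (n`!%:R : Kt k) != 0.
Proof.
rewrite -(rmorph_nat (@tofrac {poly k})) tofrac_eq0 -polyC_natr polyC_eq0.
exact/natr_neq0/fact_gt0.
Qed.

Lemma sigma_exp_trunc (x : diffop k) : sigma p x = exp_trunc ad (size x) 1 x.
Proof. by apply: eq_bigr => n _; rewrite expr1n mul1r. Qed.

Lemma size_exp_trunc B a (x : diffop k) : (size (exp_trunc ad B a x) <= size x)%N.
Proof.
apply: size_sum_leq => n _; apply: leq_trans (size_scale_leq _ _) _.
exact: size_iter_adp.
Qed.

Lemma sigma_exp_truncD B a (x : diffop k) : (size x <= B)%N ->
  sigma p (exp_trunc ad B a x) = exp_trunc ad B (a + 1) x.
Proof.
move=> le_xB; set y := exp_trunc ad B a x.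
have le_yB : (size y <= B)%N := leq_trans (size_exp_trunc _ _ _) le_xB.
rewrite sigma_exp_trunc -(exp_trunc_widen (adpZ p) _ (iter_adp_eq0 _ (leqnn _)) le_yB).
exact: exp_trunc_add1 fact_neq0 (adpD p) (adpZ p) _ _ _ (iter_adp_eq0 _ le_xB).
Qed.

End ExponentialOfAd.

Section InvariantOperators.
Variable k : fieldType.
Local Notation tf := (@tofrac {poly k}).
Variable V : {poly k} -> Prop.
Hypothesis V_subspace : is_subspace V.
Local Notation W := (inKt V).
Local Notation DRV := (Dop (@RinKt k) W).

Definition fracC : {rmorphism k -> Kt k} := tf \o polyC.

Lemma V_comb c u w : V u -> V w -> V (c *: u + w).
Proof. by case: V_subspace => _; apply. Qed.

Lemma V_scale c u : V u -> V (c *: u).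
Proof. by move=> Vu; rewrite -[_ *: _]addr0; apply: V_comb => //; case: V_subspace. Qed.

Lemma V_sub u w : V u -> V w -> V (u - w).
Proof. by move=> Vu Vw; rewrite addrC -scaleN1r; apply: V_comb. Qed.

Lemma W_comb c x z : W x -> W z -> W (fracC c * x + z).
Proof.
move=> [u [Vu ->]] [w [Vw ->]]; exists (c *: u + w); split; first exact: V_comb.
by rewrite /= -mul_polyC tofracD tofracM.
Qed.

Lemma Dop0 : DRV 0.
Proof. by move=> f _; rewrite act0; exists 0; split; [case: V_subspace | rewrite tofrac0]. Qed.

Lemma Dop_comb c x z : DRV x -> DRV z -> DRV (fracC c *: x + z).
Proof. by move=> Dx Dz f Rf; rewrite actD actZ; apply: W_comb; [apply: Dx | apply: Dz]. Qed.

Lemma Dop_adp p x : SV V p -> DRV x -> DRV (adp p x).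
Proof.
move=> SVp Dx f [r ->]; rewrite act_adp -tofracM.
have [w1 [Vw1 ->]] := Dx (tf (p * r)) (ex_intro _ _ erefl).
have [w2 [Vw2 ->]] := Dx (tf r) (ex_intro _ _ erefl).
exists (w1 - p * w2); split; first by apply: V_sub => //; apply: SVp.
by rewrite tofracB tofracM.
Qed.

Lemma Dop_exp_trunc p B (a : k) x : SV V p -> DRV x ->
  DRV (exp_trunc (adp p) B (fracC a) x).
Proof.
move=> SVp Dx; rewrite /exp_trunc; elim/big_rec: _ => [|n y _ Dy]; first exact: Dop0.
have -> : fracC a ^+ n / n`!%:R = fracC (a ^+ n / n`!%:R).
  by rewrite rmorphM rmorphXn fmorphV rmorph_nat.
apply: Dop_comb => //; case: n => n _ /=.
by elim: n => //= n IH; apply: Dop_adp.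
Qed.

Section TestOperator.
Hypothesis chark0 : [pchar k] =i pred0.
Variable b : {poly k}.
Hypothesis b_neq0 : b != 0.
Hypothesis Ob_SV : forall a, Ob b a -> SV V a.
Variable v : {poly k}.
Hypothesis Vv : V v.
Let m := (size b).-1.

Definition test_coef (j : nat) : {poly k} := (-1) ^+ j *: b^`(m - j).
Definition test_poly (r : {poly k}) : {poly k} := \sum_(j < m.+1) test_coef j * r^`(j).
Definition test_op : diffop k := \poly_(j < m.+1) tf (v * test_coef j).

Lemma size_b : size b = m.+1.
Proof. by rewrite /m prednK // lt0n size_poly_eq0. Qed.

Lemma deriv_test_poly r : (test_poly r)^`() = b * ((-1) ^+ m *: r^`(m.+1)).
Proof.
pose K j : {poly k} := (-1) ^+ j *: (b^`(m.+1 - j) * r^`(j)).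
rewrite /test_poly raddf_sum.
transitivity (\sum_(j < m.+1) (K j - K j.+1)).
  apply: eq_bigr => j _; change ((test_coef j * r^`(j))^`() = K j - K j.+1).
  rewrite derivM /test_coef derivZ -derivnS /K.
  have le_jm : (j <= m)%N by rewrite -ltnS.
  by rewrite -subSn // subSS exprS mulN1r scaleNr opprK -!scalerAl -derivnS.
rewrite -(big_mkord xpredT (fun j => K j - K j.+1)).
rewrite (eq_bigr (fun j => - K j.+1 - - K j)) => [|j _]; last by rewrite opprK addrC.
rewrite telescope_sumr // opprK /K subn0 subnn derivn0.
rewrite (@derivn_poly0 _ b m.+1) ?size_b //.
by rewrite mul0r scaler0 addr0 exprS mulN1r scaleNr opprK scalerAr.
Qed.

Lemma SV_test_poly r : SV V (test_poly r).
Proof. by apply: Ob_SV; exists ((-1) ^+ m *: r^`(m.+1)); apply: deriv_test_poly. Qed.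

Lemma test_poly1 : test_poly 1 = (b`_m *+ m`!)%:P.
Proof.
rewrite /test_poly big_ord_recl /= /test_coef expr0 scale1r subn0 mulr1 big1 ?addr0.
  apply/polyP => i; rewrite coef_derivn coefC.
  case: i => [|i] /=; first by rewrite addn0 ffactnn.
  by rewrite nth_default ?mul0rn // size_b -addSnnS leq_addr.
by move=> j _; rewrite -derivnS -polyC1 derivnC /= mulr0.
Qed.

Lemma test_poly1_neq0 : b`_m *+ m`! != 0.
Proof.
rewrite -mulr_natr mulf_neq0 ?natr_neq0 ?fact_gt0 //.
by move: b_neq0; rewrite -lead_coef_eq0 lead_coefE size_b.
Qed.

Lemma act_test_op r : act test_op (tf r) = tf (v * test_poly r).
Proof.
rewrite (@act_widen _ test_op _ m.+1) ?size_poly // /test_poly mulr_sumr rmorph_sum.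
by apply: eq_bigr => j _; rewrite coef_poly ltn_ord iter_derF_tofrac -tofracM mulrA.
Qed.

Lemma Dop_test_op : DRV test_op.
Proof.
move=> f [r ->]; rewrite act_test_op; exists (v * test_poly r); split => //.
by rewrite mulrC; apply: SV_test_poly.
Qed.

Lemma Dop_adp_test_op p : (forall x, DRV x -> DRV (sigma p x)) -> DRV (adp p test_op).
Proof.
(* The bound leaves room for the index 1 extracted below. *)
move=> sigmaD; set B := (size test_op).+2.
have le_B : (size test_op <= B)%N by rewrite leqW ?leqnSn.
have D_exp : forall j : nat, DRV (exp_trunc (adp p) B (fracC j%:R) test_op).
  elim=> [|j IH].
    by rewrite rmorph0 exp_trunc0 ?iter_adp_eq0 //; apply: Dop_test_op.
  by rewrite mulrSr rmorphD rmorph1 -sigma_exp_truncD //; apply: sigmaD.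
pose y n := (n`!%:R)^-1 *: iter n (adp p) test_op.
have Dy1 : DRV (y 1).
  apply: (@vandermonde_extract _ _ fracC _ (natr_neq0 chark0) _ Dop0 Dop_comb B) => // j _.
  have <- : exp_trunc (adp p) B (fracC j%:R) test_op = \sum_(n < B) (j%:R ^+ n) *: y n.
    by rewrite rmorph_nat; apply: eq_bigr => n _; rewrite /y scalerA.
  exact: D_exp.
by move: Dy1; rewrite /y /= invr1 scale1r.
Qed.

Lemma SV_of_sigma_invariant p : (forall x, DRV x -> DRV (sigma p x)) -> V (p * v).
Proof.
move=> sigmaD; set g := b`_m *+ m`!.
have [w [Vw]] := Dop_adp_test_op sigmaD (ex_intro _ 1 erefl).
rewrite act_adp -tofracM mulr1 !act_test_op test_poly1 -tofracM -tofracB.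
move/tofrac_inj => wE.
have Vpvg : V (p * (v * g%:P)).
  rewrite (_ : p * _ = v * test_poly p - w); last by rewrite -wE opprB addrC subrK.
  by apply: V_sub => //; rewrite mulrC; apply: SV_test_poly.
rewrite (_ : p * v = g^-1 *: (p * (v * g%:P))); first exact: V_scale.
rewrite -mul_polyC (_ : g^-1%:P * _ = p * v * (g^-1%:P * g%:P)); last by ring.
by rewrite -polyCM mulVf ?test_poly1_neq0 // mulr1.
Qed.

End TestOperator.

End InvariantOperators.

Theorem theorem6 (k : fieldType) (chark0 : [pchar k] =i pred0)
  (V : {poly k} -> Prop) (p : {poly k}) :
  primary_decomposable V ->
  ((forall e : diffop k,
      Dop (@RinKt k) (inKt V) e <->
      exists d, Dop (@RinKt k) (inKt V) d /\ sigma p d = e)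
   <-> SV V p).
Proof.
move=> [V_subspace [_ [b [/eqP b_neq0 Ob_SV]]]]; split.
  move=> sigma_inv v Vv; apply: (SV_of_sigma_invariant V_subspace chark0 b_neq0 Ob_SV Vv).
  by move=> x Dx; apply/(sigma_inv _).2; exists x.
move=> SVp e; split=> [De | [d [Dd <-]]].
  exists (exp_trunc (adp p) (size e) (fracC k (-1)) e).
  split; first exact: Dop_exp_trunc.
  by rewrite sigma_exp_truncD // rmorphN1 addNr exp_trunc0 // iter_adp_eq0.
by rewrite sigma_exp_trunc -(rmorph1 (fracC k)); apply: Dop_exp_trunc.
Qed.
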